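(* Let $\mathbb F$ be a field and let $P(s)\in\mathbb F[s]^{p\times q}$ be a matrix pencil of rank $1$. 1. If $P(s)$ has a nontrivial invariant factor, then there exist nonzero vectors $u\in\mathbb F^p$, $\bar v\in\mathbb F^q$ and nonzero pencils $\bar u(s)\in\mathbb F[s]^p$, $v(s)\in\mathbb F[s]^q$ such that $P(s)=uv(s)^T=\bar u(s)\bar v^T$. 2. If $P(s)$ has an infinite elementary divisor, then there exist nonzero vectors $u\in\mathbb F^p$, $v\in\mathbb F^q$ such that $P(s)=uv^T$. 3. If $P(s)$ has a positive column minimal index, then there exist a nonzero vector $u\in\mathbb F^p$ and a nonzero pencil $v(s)\in\mathbb F[s]^q$ such that $P(s)=uv(s)^T$. 4. If $P(s)$ has a positive row minimal index, then there exist a nonzero vector $v\in\mathbb F^q$ and a nonzero pencil $u(s)\in\mathbb F[s]^p$ such that $P(s)=u(s)v^T$.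
   Context: A matrix pencil is a polynomial matrix of degree at most $1$, $G(s)=G_0+sG_1$; a vector pencil in $\mathbb F[s]^p$ is a column vector of degree at most $1$. The rank of a pencil is its normal rank. Its Kronecker invariants (complete invariants under strict equivalence $G\mapsto QGR$, $Q,R$ invertible constant matrices) are the invariant factors (monic polynomials in $\mathbb F[s]$; ''nontrivial'' means of positive degree), the infinite elementary divisors $t^{k}$ with $k>0$, and the column and row minimal indices. *)

From HB Require Import structures.
From mathcomp Require Import all_boot all_order all_algebra.
Set Implicit Arguments. Unset Strict Implicit. Unset Printing Implicit Defensive.
Import Order.TTheory GRing.Theory Num.Theory.
Local Open Scope ring_scope.

Section Pencils.
Variable F : fieldType.
Local Notation P_ := {poly F}.

Definition is_pencil (p q : nat) (P : 'M[P_]_(p, q)) : Prop :=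
  forall i j, (size (P i j) <= 2)%N.

Definition nrank (p q : nat) (P : 'M[P_]_(p, q)) : nat :=
  \rank (map_mx (@tofrac P_) P).

Definition minor (p q k : nat) (P : 'M[P_]_(p, q))
  (f : {ffun 'I_k -> 'I_p}) (g : {ffun 'I_k -> 'I_q}) : P_ :=
  \det (\matrix_(i < k, j < k) P (f i) (g j)).

Definition monicize (d : P_) : P_ := if d == 0 then 0 else (lead_coef d)^-1 *: d.

(* k-th determinantal divisor: monic gcd of all k x k minors (D_0 = 1). *)
Definition detdiv (p q : nat) (P : 'M[P_]_(p, q)) (k : nat) : P_ :=
  monicize (\big[@gcdp F/0]_(f : {ffun 'I_k -> 'I_p})
              \big[@gcdp F/0]_(g : {ffun 'I_k -> 'I_q}) minor P f g).

(* k-th invariant factor (1 <= k <= nrank P): D_k / D_(k-1). *)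
Definition inv_factor (p q : nat) (P : 'M[P_]_(p, q)) (k : nat) : P_ :=
  detdiv P k %/ detdiv P k.-1.

Definition has_nontrivial_inv_factor (p q : nat) (P : 'M[P_]_(p, q)) : Prop :=
  exists k, (0 < k <= nrank P)%N /\ (1 < size (inv_factor P k))%N.

Definition pencil_rev (p q : nat) (P : 'M[P_]_(p, q)) : 'M[P_]_(p, q) :=
  \matrix_(i, j) (((P i j)`_(1%N))%:P + (P i j)`_(0%N) *: 'X).

(* Infinite elementary divisors t^k (k > 0) of P are the elementary divisors
   at the eigenvalue 0 of the reversal of P. *)
Definition has_infinite_elem_div (p q : nat) (P : 'M[P_]_(p, q)) : Prop :=
  exists k, (0 < k <= nrank (pencil_rev P))%N /\ root (inv_factor (pencil_rev P) k) 0.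

Definition col_deg (m n : nat) (B : 'M[P_]_(m, n)) (j : 'I_n) : nat :=
  \max_(i < m) (size (B i j)).-1.

Definition right_poly_basis (p q : nat) (P : 'M[P_]_(p, q))
  (B : 'M[P_]_(q, q - nrank P)) : Prop :=
  P *m B = 0 /\ \rank (map_mx (@tofrac P_) B) = (q - nrank P)%N.

Definition right_minimal_basis (p q : nat) (P : 'M[P_]_(p, q))
  (B : 'M[P_]_(q, q - nrank P)) : Prop :=
  right_poly_basis B /\
  forall B' : 'M[P_]_(q, q - nrank P), right_poly_basis B' ->
    (\sum_j col_deg B j <= \sum_j col_deg B' j)%N.

(* Column minimal indices = column degrees of a minimal basis of the right
   null space; row minimal indices = those of the left null space (of P^T). *)
Definition has_pos_col_min_index (p q : nat) (P : 'M[P_]_(p, q)) : Prop :=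
  exists B, @right_minimal_basis p q P B /\ exists j, (0 < col_deg B j)%N.

Definition has_pos_row_min_index (p q : nat) (P : 'M[P_]_(p, q)) : Prop :=
  has_pos_col_min_index P^T.

End Pencils.

(* Over F(s) a rank-one matrix has vanishing 2x2 minors, so for a nonzero
   entry e = P i0 j0 we get e * P i j = P i j0 * P i0 j between polynomials of
   degree at most one.  If e is constant one of the two factors on the right
   must be constant; otherwise the root of e is a root of one of them.  Either
   way, the whole column j0 or the whole row i0 consists of constant multiples
   of e, so P = u v(s)^T or P = u(s) v^T with a constant u or v.
   - A nontrivial invariant factor of a rank-one P is the monic gcd of the
     entries; it has degree one, so every entry is a multiple of e and both
     factorizations hold.
   - The reversal of P inherits the constant factor, so it has normal rank at
     most one; an infinite elementary divisor then says that every entry of the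
     reversal vanishes at 0, i.e. P has no degree-one term.
   - A constant right factor v^T gives the constant null-space basis ker v^T,
     so all column minimal indices would vanish; rows follow by transposition. *)

From mathcomp Require Import all_boot all_algebra zify.
Set Implicit Arguments. Unset Strict Implicit. Unset Printing Implicit Defensive.
Import GRing.Theory.
Local Open Scope ring_scope.

Definition minors2_vanish (R : comNzRingType) m n (A : 'M[R]_(m, n)) : Prop :=
  forall i j k l, A i j * A k l = A i l * A k j.

Lemma minors2_vanish_tr (R : comNzRingType) m n (A : 'M[R]_(m, n)) :
  minors2_vanish A -> minors2_vanish A^T.
Proof. by move=> mA i j k l; rewrite !mxE mulrC mA mulrC. Qed.

Lemma mxrank1_factor (K : fieldType) m n (A : 'M[K]_(m, n)) : \rank A = 1%N ->
  exists u : 'cV[K]_m, exists v : 'cV[K]_n, [/\ u != 0, v != 0 & A = u *m v^T].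
Proof.
move=> rA; have A0 : A != 0 by rewrite -mxrank_eq0 rA.
have := mulmx_base A; move: (col_base A) (row_base A); rewrite rA => u v eA.
exists u, v^T; rewrite trmxK trmx_eq0; split; last by rewrite eA.
- by apply: contraNneq A0 => u0; rewrite -eA u0 mul0mx.
- by apply: contraNneq A0 => v0; rewrite -eA v0 mulmx0.
Qed.

Lemma mxrank1_minors2 (K : fieldType) m n (A : 'M[K]_(m, n)) :
  \rank A = 1%N -> minors2_vanish A.
Proof.
case/mxrank1_factor=> u [v [_ _ ->]] i j k l; rewrite !mxE !big_ord1 !mxE.
by rewrite mulrACA [in RHS]mulrACA [v l 0 * _]mulrC.
Qed.

Lemma kernel_basis (K : fieldType) m n (A : 'M[K]_(m, n)) k : k = (n - \rank A)%N ->
  exists B : 'M[K]_(n, k), A *m B = 0 /\ \rank B = k.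
Proof.
move=> ->; rewrite -mxrank_tr -(mxrank_ker A^T).
move: (row_base (kermx A^T)) (eq_row_base (kermx A^T)) (row_base_free (kermx A^T)).
move=> B eB /eqP rB; exists B^T; rewrite mxrank_tr; split=> //.
apply: trmx_inj; rewrite trmx_mul trmxK trmx0; apply/sub_kermxP.
by rewrite eB submx_refl.
Qed.

Section RankOnePencils.
Variable F : fieldType.
Implicit Types (e x y z : {poly F}) (p q : nat).

(* For e != 0 this says x \in F e: the scalar is necessarily the ratio of the
   leading coefficients. *)
Definition const_multiple e x : bool := x == (lead_coef x / lead_coef e) *: e.

Lemma const_multiple0 e : const_multiple e 0.
Proof. by rewrite /const_multiple lead_coef0 mul0r scale0r. Qed.

Lemma const_multipleC e x : size e = 1%N -> (size x <= 1)%N -> const_multiple e x.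
Proof.
move=> /eqP/size_poly1P[c c0 ->] /size1_polyC ->.
by rewrite /const_multiple !lead_coefC -mul_polyC -polyCM divfK.
Qed.

Lemma size2_factor x r : size x = 2%N -> root x r -> x = lead_coef x *: ('X - r%:P).
Proof.
move=> sx /factor_theorem[y def_x].
have y0 : y != 0 by apply: contra_eqN sx => /eqP y0; rewrite def_x y0 mul0r size_poly0.
have /eqP/size_poly1P[c _ def_y] : size y = 1%N.
  by move: sx; rewrite def_x size_mul ?polyXsubC_eq0 // size_XsubC addn2 => -[].
by rewrite def_x def_y lead_coefM lead_coefXsubC mulr1 lead_coefC mul_polyC.
Qed.

Lemma const_multiple_root e x r : size e = 2%N -> root e r ->
  (size x <= 2)%N -> root x r -> const_multiple e x.
Proof.
move=> se er sx xr; have [->|x0] := eqVneq x 0; first exact: const_multiple0.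
have {}sx : size x = 2%N by have := root_size_gt1 x0 xr; lia.
have e0 : lead_coef e != 0 by rewrite lead_coef_eq0 -size_poly_eq0 se.
rewrite /const_multiple; set c := lead_coef x; set d := lead_coef e.
by rewrite {1}(size2_factor sx xr) (size2_factor se er) scalerA divfK.
Qed.

Lemma const_multiple_mul e x y z : e != 0 ->
  (size e <= 2)%N -> (size x <= 2)%N -> (size y <= 2)%N -> (size z <= 2)%N ->
  e * z = x * y -> const_multiple e x || const_multiple e y.
Proof.
move=> e0 se sx sy sz ezxy.
have [se1|se2] : size e = 1%N \/ size e = 2%N.
  by move: e0; rewrite -size_poly_eq0; lia.
- case: (leqP (size x) 1) => [/(const_multipleC se1) -> //|x2].
  case: (leqP (size y) 1) => [/(const_multipleC se1) ->|y2]; first by rewrite orbT.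
  have [sx2 sy2] : size x = 2%N /\ size y = 2%N by lia.
  have := size_polyMleq e z.
  by rewrite ezxy size_mul -?size_poly_eq0 ?sx2 ?sy2 // se1 ltnNge sz.
- have [r er] := poly2_root se2.
  have : root (x * y) r by rewrite -ezxy rootM er.
  rewrite rootM => /orP[xr|yr]; first by rewrite (const_multiple_root se2 er sx xr).
  by rewrite (const_multiple_root se2 er sy yr) orbT.
Qed.

Lemma nrank1_minors2 p q (P : 'M[{poly F}]_(p, q)) : nrank P = 1%N -> minors2_vanish P.
Proof.
move=> /mxrank1_minors2 mP i j k l; apply/eqP; rewrite -tofrac_eq !tofracM.
by have := mP i j k l; rewrite !mxE => ->.
Qed.

Lemma nrank1_entry_neq0 p q (P : 'M[{poly F}]_(p, q)) : nrank P = 1%N ->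
  exists i j, P i j != 0.
Proof.
move=> rP; have /existsP[[i j] Pij] : [exists ij : 'I_p * 'I_q, P ij.1 ij.2 != 0].
  rewrite -negb_forall; apply/negP => /forallP P0; move: rP.
  suff -> : P = 0 by rewrite /nrank map_mx0 mxrank0.
  by apply/matrixP => i j; rewrite mxE; apply/eqP/(P0 (i, j)).
by exists i, j.
Qed.

Lemma nrank_tr p q (P : 'M[{poly F}]_(p, q)) : nrank P^T = nrank P.
Proof. by rewrite /nrank -map_trmx mxrank_tr. Qed.

Lemma nrank_mul_le p r q (A : 'M[{poly F}]_(p, r)) (B : 'M_(r, q)) : (nrank (A *m B) <= r)%N.
Proof. by rewrite /nrank map_mxM (leq_trans (mxrankM_maxl _ _)) ?rank_leq_col. Qed.

Lemma nrank_polyC p q (A : 'M[F]_(p, q)) : nrank (map_mx polyC A) = \rank A.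
Proof. by rewrite /nrank -map_mx_comp mxrank_map. Qed.

Lemma is_pencil_tr p q (P : 'M[{poly F}]_(p, q)) : is_pencil P -> is_pencil P^T.
Proof. by move=> pP i j; rewrite mxE. Qed.

Lemma is_pencil_col p q (P : 'M[{poly F}]_(p, q)) j : is_pencil P -> is_pencil (col j P).
Proof. by move=> pP i k; rewrite mxE. Qed.

Lemma is_pencil_tr_row p q (P : 'M[{poly F}]_(p, q)) i : is_pencil P -> is_pencil (row i P)^T.
Proof. by move=> pP j k; rewrite !mxE. Qed.

Lemma cV_neq0 (R : nzRingType) n (v : 'cV[R]_n) i : v i 0 != 0 -> v != 0.
Proof. by apply: contraNneq => ->; rewrite mxE. Qed.

Lemma col_multiples_factor p q (P : 'M[{poly F}]_(p, q)) i0 j0 :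
  minors2_vanish P -> P i0 j0 != 0 -> (forall i, const_multiple (P i0 j0) (P i j0)) ->
  exists2 u : 'cV[F]_p, u != 0 & P = map_mx polyC u *m row i0 P.
Proof.
move=> mP e0 cP; exists (\col_i (lead_coef (P i j0) / lead_coef (P i0 j0))).
  by apply: (@cV_neq0 _ _ _ i0); rewrite mxE divff ?oner_neq0 ?lead_coef_eq0.
apply/matrixP => i j; rewrite !mxE big_ord1 !mxE.
apply: (mulfI e0); rewrite mulrC mP {1}(eqP (cP i)) -mul_polyC.
by rewrite -mulrA mulrCA.
Qed.

Lemma row_multiples_factor p q (P : 'M[{poly F}]_(p, q)) i0 j0 :
  minors2_vanish P -> P i0 j0 != 0 -> (forall j, const_multiple (P i0 j0) (P i0 j)) ->
  exists2 v : 'cV[F]_q, v != 0 & P = col j0 P *m (map_mx polyC v)^T.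
Proof.
move=> mP e0 cP; have [|||v v0 eP] := @col_multiples_factor _ _ P^T j0 i0.
- exact: minors2_vanish_tr.
- by rewrite mxE.
- by move=> j; rewrite !mxE.
by exists v => //; rewrite -[LHS]trmxK eP trmx_mul -tr_col !trmxK.
Qed.

Lemma pencil_const_factor p q (P : 'M[{poly F}]_(p, q)) i0 j0 :
  is_pencil P -> minors2_vanish P -> P i0 j0 != 0 ->
  (exists2 u : 'cV[F]_p, u != 0 & P = map_mx polyC u *m row i0 P) \/
  (exists2 v : 'cV[F]_q, v != 0 & P = col j0 P *m (map_mx polyC v)^T).
Proof.
move=> pP mP e0.
have [/forallP cP|] := boolP [forall i, const_multiple (P i0 j0) (P i j0)].
  by left; apply: col_multiples_factor mP e0 cP.
rewrite negb_forall => /existsP[i1 ncP]; right; apply: (row_multiples_factor mP e0) => j.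
have := const_multiple_mul e0 (pP i0 j0) (pP i1 j0) (pP i0 j) (pP i1 j).
by rewrite mP mulrC (negbTE ncP) => /(_ erefl).
Qed.

Lemma dvdp_big_gcdp (I : finType) (G : I -> {poly F}) i : \big[@gcdp F/0]_j G j %| G i.
Proof.
elim: (index_enum I) (mem_index_enum i) => // k r IHr.
rewrite big_cons in_cons => /orP[/eqP <-|ir]; first exact: dvdp_gcdl.
exact: dvdp_trans (dvdp_gcdr _ _) (IHr ir).
Qed.

Lemma dvdp_monicize (g : {poly F}) : monicize g %| g.
Proof.
rewrite /monicize; have [->|g0] := eqVneq g 0; first exact: dvdpp.
by rewrite dvdpZl ?dvdpp // invr_eq0 lead_coef_eq0.
Qed.

Lemma detdiv0 p q (P : 'M[{poly F}]_(p, q)) : detdiv P 0 = 1.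
Proof.
have ffun0E (T : finType) : xpredT =1 pred1 (ffun0 (card_ord 0) : {ffun 'I_0 -> T}).
  by move=> g; apply/esym/eqP/ffunP => -[].
rewrite /detdiv (big_pred1_id _ _ _ (ffun0E _)) gcdp0.
rewrite (big_pred1_id _ _ _ (ffun0E _)) gcdp0 /minor det_mx00.
by rewrite /monicize oner_eq0 lead_coef1 invr1 scale1r.
Qed.

Lemma inv_factor1 p q (P : 'M[{poly F}]_(p, q)) : inv_factor P 1 = detdiv P 1.
Proof. by rewrite /inv_factor detdiv0 divp1. Qed.

Lemma detdiv1_dvdp p q (P : 'M[{poly F}]_(p, q)) i j : detdiv P 1 %| P i j.
Proof.
have -> : P i j = minor P [ffun _ : 'I_1 => i] [ffun _ : 'I_1 => j].
  by rewrite /minor det_mx11 !mxE !ffunE.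
apply: dvdp_trans (dvdp_monicize _) _.
exact: dvdp_trans (dvdp_big_gcdp _ [ffun _ : 'I_1 => i]) (dvdp_big_gcdp _ _).
Qed.

Lemma nontrivial_inv_factor_multiples p q (P : 'M[{poly F}]_(p, q)) i0 j0 :
  is_pencil P -> nrank P = 1%N -> P i0 j0 != 0 -> has_nontrivial_inv_factor P ->
  forall i j, const_multiple (P i0 j0) (P i j).
Proof.
move=> pP rP e0 [k [k1 Dk]].
have {k1} k1 : k = 1%N by move: k1; rewrite rP; lia.
move: Dk; rewrite k1 inv_factor1 => D2.
have D_e := detdiv1_dvdp P i0 j0.
have sDe := dvdp_leq e0 D_e; have se2 := pP i0 j0.
have sD : size (detdiv P 1) = 2%N by apply/eqP; rewrite eqn_leq D2 (leq_trans sDe se2).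
have se : size (P i0 j0) = 2%N by apply/eqP; rewrite eqn_leq se2 (leq_trans D2 sDe).
have [r Dr] := poly2_root sD.
move=> i j; apply: (const_multiple_root se (root_dvdp D_e Dr) (pP i j)).
exact: root_dvdp (detdiv1_dvdp P i j) Dr.
Qed.

Lemma rank1_pencil_inv_factor p q (P : 'M[{poly F}]_(p, q)) :
  is_pencil P -> nrank P = 1%N -> has_nontrivial_inv_factor P ->
  exists (u : 'cV[F]_p) (vb : 'cV[F]_q) (ub : 'cV[{poly F}]_p) (v : 'cV[{poly F}]_q),
    [/\ u != 0, vb != 0, ub != 0 & v != 0] /\ [/\ is_pencil ub, is_pencil v,
        P = map_mx polyC u *m v^T & P = ub *m (map_mx polyC vb)^T].
Proof.
move=> pP rP nP; have [i0 [j0 e0]] := nrank1_entry_neq0 rP.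
have cP := nontrivial_inv_factor_multiples pP rP e0 nP.
have [u u0 Pu] := col_multiples_factor (nrank1_minors2 rP) e0 (cP^~ j0).
have [v v0 Pv] := row_multiples_factor (nrank1_minors2 rP) e0 (cP i0).
exists u, v, (col j0 P), (row i0 P)^T; split; split => //.
- by apply: (@cV_neq0 _ _ _ i0); rewrite mxE.
- by apply: (@cV_neq0 _ _ _ j0); rewrite !mxE.
- exact: is_pencil_col.
- exact: is_pencil_tr_row.
- by rewrite trmxK.
Qed.

Definition lin_rev y : {poly F} := (y`_1)%:P + y`_0 *: 'X.

Lemma pencil_rev_tr p q (P : 'M[{poly F}]_(p, q)) : pencil_rev P^T = (pencil_rev P)^T.
Proof. by apply/matrixP => i j; rewrite !mxE. Qed.

Lemma pencil_rev_mulCl p r q (A : 'M[F]_(p, r)) (B : 'M[{poly F}]_(r, q)) :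
  pencil_rev (map_mx polyC A *m B) = map_mx polyC A *m pencil_rev B.
Proof.
apply/matrixP => i j; rewrite !mxE !coef_sum rmorph_sum scaler_suml -big_split /=.
apply: eq_bigr => k _; rewrite !mxE !coefCM polyCM -scalerA !mul_polyC.
by rewrite scalerDr.
Qed.

Lemma pencil_rev_mulCr p r q (A : 'M[{poly F}]_(p, r)) (B : 'M[F]_(r, q)) :
  pencil_rev (A *m map_mx polyC B) = pencil_rev A *m map_mx polyC B.
Proof.
apply: trmx_inj; rewrite -pencil_rev_tr !trmx_mul map_trmx pencil_rev_mulCl.
by rewrite pencil_rev_tr.
Qed.

Lemma nrank_pencil_rev_le1 p q (P : 'M[{poly F}]_(p, q)) :
  is_pencil P -> nrank P = 1%N -> (nrank (pencil_rev P) <= 1)%N.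
Proof.
move=> pP rP; have [i0 [j0 e0]] := nrank1_entry_neq0 rP.
have [[u _ ->]|[v _ ->]] := pencil_const_factor pP (nrank1_minors2 rP) e0.
- by rewrite pencil_rev_mulCl nrank_mul_le.
- by rewrite map_trmx pencil_rev_mulCr nrank_mul_le.
Qed.

Lemma lin_rev_root0 y : (size y <= 2)%N -> root (lin_rev y) 0 -> y = (y`_0)%:P.
Proof.
rewrite /root hornerD hornerC hornerZ hornerX mulr0 addr0 => sy /eqP y1.
apply/polyP => -[|[|n]]; rewrite coefC //=.
by rewrite nth_default // (leq_trans sy).
Qed.

Lemma infinite_elem_div_const p q (P : 'M[{poly F}]_(p, q)) :
  is_pencil P -> nrank P = 1%N -> has_infinite_elem_div P ->
  P = map_mx polyC (map_mx (coefp 0) P).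
Proof.
move=> pP rP [k [k1 Dk]].
have {k1} k1 : k = 1%N by move: k1 (nrank_pencil_rev_le1 pP rP); lia.
move: Dk; rewrite k1 inv_factor1 => D0.
apply/matrixP => i j; rewrite !mxE /=; apply: lin_rev_root0 => //.
by have := root_dvdp (detdiv1_dvdp (pencil_rev P) i j) D0; rewrite mxE.
Qed.

Lemma rank1_pencil_infinite_elem_div p q (P : 'M[{poly F}]_(p, q)) :
  is_pencil P -> nrank P = 1%N -> has_infinite_elem_div P ->
  exists (u : 'cV[F]_p) (v : 'cV[F]_q),
    [/\ u != 0, v != 0 & P = map_mx polyC u *m (map_mx polyC v)^T].
Proof.
move=> pP rP iP; have P0 := infinite_elem_div_const pP rP iP.
have [|u [v [u0 v0 eP]]] := @mxrank1_factor _ _ _ (map_mx (coefp 0) P).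
  by rewrite -nrank_polyC -P0.
by exists u, v; rewrite P0 eP map_mxM map_trmx.
Qed.

Lemma col_deg_polyC m n (B : 'M[F]_(m, n)) j : col_deg (map_mx polyC B) j = 0%N.
Proof. by apply: big1 => i _; rewrite mxE size_polyC; case: (B i j != 0). Qed.

Lemma const_basis_no_pos_col_min_index p q (P : 'M[{poly F}]_(p, q))
    (B : 'M[F]_(q, q - nrank P)) :
  @right_poly_basis _ _ _ P (map_mx polyC B) -> ~ has_pos_col_min_index P.
Proof.
move=> bB [B' [[_ minB'] [j Bj]]]; have := minB' _ bB.
rewrite [X in (_ <= X)%N]big1 => [|k _]; last exact: col_deg_polyC.
by rewrite (bigD1 j) //=; lia.
Qed.

Lemma const_right_factor_basis p q (P : 'M[{poly F}]_(p, q)) (w : 'cV_p) (v : 'cV[F]_q) :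
  v != 0 -> nrank P = 1%N -> P = w *m (map_mx polyC v)^T ->
  exists B : 'M[F]_(q, q - nrank P), @right_poly_basis _ _ _ P (map_mx polyC B).
Proof.
move=> v0 rP eP; have [|B [vB rB]] := @kernel_basis _ _ _ v^T (q - nrank P).
  by rewrite rP rank_rV trmx_eq0 v0.
exists B; split; last exact: etrans (nrank_polyC B) rB.
by rewrite [X in X *m _]eP -mulmxA map_trmx -map_mxM vB map_mx0 mulmx0.
Qed.

Lemma rank1_pencil_pos_col_min_index p q (P : 'M[{poly F}]_(p, q)) :
  is_pencil P -> nrank P = 1%N -> has_pos_col_min_index P ->
  exists (u : 'cV[F]_p) (v : 'cV[{poly F}]_q),
    [/\ u != 0, v != 0, is_pencil v & P = map_mx polyC u *m v^T].
Proof.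
move=> pP rP cP; have [i0 [j0 e0]] := nrank1_entry_neq0 rP.
have [[u u0 eP]|[v v0 eP]] := pencil_const_factor pP (nrank1_minors2 rP) e0.
- exists u, (row i0 P)^T; rewrite trmxK; split => //; last exact: is_pencil_tr_row.
  by apply: (@cV_neq0 _ _ _ j0); rewrite !mxE.
- have [B bB] := const_right_factor_basis v0 rP eP.
  by case: (const_basis_no_pos_col_min_index bB).
Qed.

Lemma rank1_pencil_pos_row_min_index p q (P : 'M[{poly F}]_(p, q)) :
  is_pencil P -> nrank P = 1%N -> has_pos_row_min_index P ->
  exists (v : 'cV[F]_q) (u : 'cV[{poly F}]_p),
    [/\ v != 0, u != 0, is_pencil u & P = u *m (map_mx polyC v)^T].
Proof.
move=> pP rP rowP; have rPT : nrank P^T = 1%N by rewrite nrank_tr.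
have [v [u [v0 u0 pu ePT]]] := rank1_pencil_pos_col_min_index (is_pencil_tr pP) rPT rowP.
by exists v, u; split => //; rewrite -[P]trmxK ePT trmx_mul trmxK.
Qed.

End RankOnePencils.

Theorem proposition2p1 (F : fieldType) (p q : nat) (P : 'M[{poly F}]_(p, q)) :
  is_pencil P -> nrank P = 1%N ->
  (has_nontrivial_inv_factor P ->
     exists (u : 'cV[F]_p) (vb : 'cV[F]_q) (ub : 'cV[{poly F}]_p) (v : 'cV[{poly F}]_q),
       [/\ u != 0, vb != 0, ub != 0 & v != 0] /\ [/\ is_pencil ub, is_pencil v,
           P = map_mx polyC u *m v^T & P = ub *m (map_mx polyC vb)^T]) /\
  (has_infinite_elem_div P ->
     exists (u : 'cV[F]_p) (v : 'cV[F]_q),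
       [/\ u != 0, v != 0 & P = map_mx polyC u *m (map_mx polyC v)^T]) /\
  (has_pos_col_min_index P ->
     exists (u : 'cV[F]_p) (v : 'cV[{poly F}]_q),
       [/\ u != 0, v != 0, is_pencil v & P = map_mx polyC u *m v^T]) /\
  (has_pos_row_min_index P ->
     exists (v : 'cV[F]_q) (u : 'cV[{poly F}]_p),
       [/\ v != 0, u != 0, is_pencil u & P = u *m (map_mx polyC v)^T]).
Proof.
move=> pP rP; split; first exact: rank1_pencil_inv_factor.
split; first exact: rank1_pencil_infinite_elem_div.
split; first exact: rank1_pencil_pos_col_min_index.
exact: rank1_pencil_pos_row_min_index.
Qed.
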